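(* Let $k\ge2$, $IS=(IS_1,\dots,IS_k)\in\{\Box,\blacksquare\}^k$, and let $\tau$ be a correct compositional translation from $\mathrm{SYNCSIMPLE}$ into $\mathrm{LOCKSIMPLE}_{k,IS}$. If $\tau(!)$ is of blocking type $P_i$, then $IS_i=\blacksquare$; if $\tau(!)$ is of blocking type $P_iP_i$, then the first symbol from $\{P_i,T_i\}$ occurring in $\tau(!)$ is $T_i$, or $IS_i=\Box$. The same holds for $\tau(?)$.
   Context: $\mathrm{SYNCSIMPLE}$: subprocesses $\mathcal{U} ::= \checkmark \mid 0 \mid\, !\mathcal{U} \mid\, ?\mathcal{U}$; processes are finite parallel compositions ($\mid$ associative, commutative, $0$ a unit). Reduction: $!\mathcal{U}_1\mid ?\mathcal{U}_2\mid \mathcal{P}\to \mathcal{U}_1\mid\mathcal{U}_2\mid\mathcal{P}$. Successful: of form $\checkmark\mid\mathcal{P}$; may-convergent: reduces to a successful process; must-convergent: every reachable process is may-convergent. $\mathrm{LOCKSIMPLE}_{k,IS}$ ($IS\in\{\Box,\blacksquare\}^k$, $\Box$ empty, $\blacksquare$ full): subprocesses are words over $\{P_1,T_1,\dots,P_k,T_k\}$ followed by $0$ or $\checkmark$; states $(\mathcal{P},C)$ reduce by $(P_i\mathcal{U}\mid\mathcal{P},C)\to(\mathcal{U}\mid\mathcal{P},C[C_i:=\blacksquare])$ only if $C_i=\Box$, and $(T_i\mathcal{U}\mid\mathcal{P},C)\to(\mathcal{U}\mid\mathcal{P},C[C_i:=\Box])$ always. Success = process contains $\checkmark$; a process $\mathcal{P}$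 is may/must-convergent iff the state $(\mathcal{P},IS)$ is. A compositional translation $\tau$ is given by words $\tau(!),\tau(?)$ with $\tau(0)=0$, $\tau(\checkmark)=\checkmark$, $\tau(!\mathcal{U})=\tau(!)\tau(\mathcal{U})$, $\tau(?\mathcal{U})=\tau(?)\tau(\mathcal{U})$, $\tau$ commuting with $\mid$; correct = preserves and reflects may- and must-convergence. Blocking type of a word $S$: execute $S$ alone as a single subprocess from store $IS$; if it gets stuck at an occurrence of $P_i$ that is the first symbol from $\{P_i,T_i\}$ in $S$ (blocking prefix $R_1P_i$, $R_1$ without $P_i,T_i$), $S$ has blocking type $P_i$; if it gets stuck at an occurrence of $P_i$ whose blocking prefix has form $R_1P_iR_2P_i$ with $R_2$ containing no $P_i,T_i$, $S$ has blocking type $P_iP_i$. *)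

From HB Require Import structures.
From mathcomp Require Import all_boot.
Set Implicit Arguments. Unset Strict Implicit. Unset Printing Implicit Defensive.

Inductive star {T : Type} (R : T -> T -> Prop) : T -> T -> Prop :=
| star_refl x : star R x x
| star_step x y z : R x y -> star R y z -> star R x z.

Definition may_conv {T : Type} (R : T -> T -> Prop) (succ : T -> Prop) (x : T) :=
  exists y, star R x y /\ succ y.
Definition must_conv {T : Type} (R : T -> T -> Prop) (succ : T -> Prop) (x : T) :=
  forall y, star R x y -> may_conv R succ y.

Inductive ssym := Snd (* ! *) | Rcv (* ? *).
Definition ssym_enc (a : ssym) : bool := if a is Snd then true else false.
Definition ssym_dec (b : bool) : ssym := if b then Snd else Rcv.
Lemma ssym_encK : cancel ssym_enc ssym_dec. Proof. by case. Qed.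
HB.instance Definition _ := Equality.copy ssym (can_type ssym_encK).

(* a subprocess: a word over {!,?} followed by 0 (false) or ✓ (true) *)
Definition ssub := (seq ssym * bool)%type.
(* a process: finite parallel composition, as a list taken up to permutation *)
Definition sproc := seq ssub.

Definition sstep (P P' : sproc) : Prop :=
  exists u1 b1 u2 b2 Q,
    perm_eq P ((Snd :: u1, b1) :: (Rcv :: u2, b2) :: Q) /\
    P' = (u1, b1) :: (u2, b2) :: Q.

Definition ssucc (P : sproc) : Prop := ([::], true) \in P.

Definition smay (P : sproc) := may_conv sstep ssucc P.
Definition smust (P : sproc) := must_conv sstep ssucc P.

Inductive lsym (k : nat) := LP of 'I_k | LT of 'I_k.
Arguments LP {k}. Arguments LT {k}.
Definition lsym_enc k (a : lsym k) : bool * 'I_k :=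
  match a with LP i => (true, i) | LT i => (false, i) end.
Definition lsym_dec k (p : bool * 'I_k) : lsym k :=
  if p.1 then LP p.2 else LT p.2.
Lemma lsym_encK k : cancel (@lsym_enc k) (@lsym_dec k). Proof. by case. Qed.
HB.instance Definition _ k := Equality.copy (lsym k) (can_type (@lsym_encK k)).

Definition lsym_idx k (a : lsym k) : 'I_k := match a with LP i | LT i => i end.

(* a store: true = full (■), false = empty (□) *)
Definition store k := {ffun 'I_k -> bool}.
Definition upd k (C : store k) (i : 'I_k) (b : bool) : store k :=
  [ffun j => if j == i then b else C j].

Definition lsub k := (seq (lsym k) * bool)%type.
Definition lproc k := seq (lsub k).

Definition lstep k (s s' : lproc k * store k) : Prop :=
  (exists i u b Q, perm_eq s.1 ((LP i :: u, b) :: Q) /\ s.2 i = false /\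
                   s' = ((u, b) :: Q, upd s.2 i true)) \/
  (exists i u b Q, perm_eq s.1 ((LT i :: u, b) :: Q) /\
                   s' = ((u, b) :: Q, upd s.2 i false)).

Definition lsucc k (s : lproc k * store k) : Prop := ([::], true) \in s.1.

Definition lmay k (IS : store k) (P : lproc k) := may_conv (@lstep k) (@lsucc k) (P, IS).
Definition lmust k (IS : store k) (P : lproc k) := must_conv (@lstep k) (@lsucc k) (P, IS).

(* tau is given by the words ts = tau(!) and tr = tau(?) *)
Definition tr_sub k (ts tr : seq (lsym k)) (u : ssub) : lsub k :=
  (flatten (map (fun a => if a is Snd then ts else tr) u.1), u.2).
Definition tr_proc k (ts tr : seq (lsym k)) (P : sproc) : lproc k :=
  map (tr_sub ts tr) P.

Definition correct_translation k (IS : store k) (ts tr : seq (lsym k)) : Prop :=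
  forall P : sproc,
    (smay P <-> lmay IS (tr_proc ts tr P)) /\
    (smust P <-> lmust IS (tr_proc ts tr P)).

(* executing a word alone from a store; None = got stuck *)
Fixpoint exec k (C : store k) (s : seq (lsym k)) : option (store k) :=
  match s with
  | [::] => Some C
  | LP i :: s' => if C i then None else exec (upd C i true) s'
  | LT i :: s' => exec (upd C i false) s'
  end.

Definition no_idx k (i : 'I_k) (R : seq (lsym k)) : bool :=
  all (fun a => lsym_idx a != i) R.

(* executing S alone from IS gets stuck at an occurrence of P_i
   whose blocking prefix is R P_i *)
Definition blocking_prefix k (IS : store k) (S R : seq (lsym k)) (i : 'I_k) : Prop :=
  (exists rest, S = R ++ LP i :: rest) /\
  (exists C, exec IS R = Some C /\ C i = true).

Definition btype_P k (IS : store k) (S : seq (lsym k)) (i : 'I_k) : Prop :=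
  exists R1, blocking_prefix IS S R1 i /\ no_idx i R1.

Definition btype_PP k (IS : store k) (S : seq (lsym k)) (i : 'I_k) : Prop :=
  exists R1 R2, blocking_prefix IS S (R1 ++ LP i :: R2) i /\ no_idx i R2.

Definition first_is_T k (S : seq (lsym k)) (i : 'I_k) : Prop :=
  exists R0 rest, S = R0 ++ LT i :: rest /\ no_idx i R0.

From mathcomp Require Import all_boot.

(* A prefix with no P_i, T_i leaves slot i at IS_i, so getting stuck at the
   first P_i forces IS_i = full.  Getting past the first P_i of R1 P_i R2 P_i
   and then getting stuck requires slot i to be empty just before that P_i;
   if IS_i is full, some earlier symbol must have emptied it, and the first
   symbol of index i is then T_i, since a P_i there would have blocked. *)

Set Implicit Arguments.
Unset Strict Implicit.
Unset Printing Implicit Defensive.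

Section SingleWordExecution.

Variables (k : nat) (i : 'I_k).

Lemma upd_neq (C : store k) (j : 'I_k) b : j != i -> upd C j b i = C i.
Proof. by move=> ji; rewrite /upd ffunE eq_sym (negbTE ji). Qed.

Lemma exec_cat (C : store k) R S :
  exec C (R ++ S) = obind (fun C' => exec C' S) (exec C R).
Proof.
elim: R C => [|[j|j] R IHR] C /=; [by [] | by case: (C j) | exact: IHR].
Qed.

Lemma exec_no_idx (C C' : store k) R :
  no_idx i R -> exec C R = Some C' -> C' i = C i.
Proof.
elim: R C => [|a R IHR] C /=; first by move=> _ [->].
case/andP; case: a => j /= ji noiR.
- by case: (C j) => //= /(IHR _ noiR) ->; rewrite upd_neq.
- by move=> /(IHR _ noiR) ->; rewrite upd_neq.
Qed.

Lemma first_is_T_catr S Y : first_is_T S i -> first_is_T (S ++ Y) i.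
Proof. by case=> R0 [rest [-> noiR0]]; exists R0, (rest ++ Y); rewrite -catA. Qed.

Lemma first_is_T_cons a S :
  lsym_idx a != i -> first_is_T S i -> first_is_T (a :: S) i.
Proof.
move=> ai [R0 [rest [-> noiR0]]].
by exists (a :: R0), rest; rewrite /no_idx /= ai.
Qed.

Lemma exec_empties_first_is_T (C C' : store k) R :
  C i -> exec C R = Some C' -> ~~ C' i -> first_is_T R i.
Proof.
elim: R C => [|a R IHR] C Ci /=; first by move=> [<-]; rewrite Ci.
have [ai | ai] := eqVneq (lsym_idx a) i.
- case: a ai => j /= <- in Ci *; first by rewrite Ci.
  by move=> _ _; exists [::], R.
- move=> execR C'i; apply: (first_is_T_cons ai).
  case: a ai execR => j /= ji; last first.
    by move=> execR; apply: (IHR _ _ execR C'i); rewrite upd_neq.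
  by case: (C j) => // execR; apply: (IHR _ _ execR C'i); rewrite upd_neq.
Qed.

Lemma btype_P_full (IS : store k) S : btype_P IS S i -> IS i.
Proof.
by case=> R1 [[_ [C [execR1 Ci]]] noiR1]; rewrite -(exec_no_idx noiR1 execR1).
Qed.

Lemma btype_PP_first_is_T (IS : store k) S :
  btype_PP IS S i -> IS i -> first_is_T S i.
Proof.
case=> R1 [R2 [[[rest ->] [C [execS _]]] _]] ISi.
rewrite -catA; apply: first_is_T_catr.
move: execS; rewrite exec_cat /=.
case execR1: (exec IS R1) => [C1|] //=.
case C1i: (C1 i) => // _.
by apply: (exec_empties_first_is_T ISi execR1); rewrite C1i.
Qed.

End SingleWordExecution.

Theorem lemma4p5 (k : nat) (IS : store k) (ts tr : seq (lsym k)) :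
  2 <= k ->
  correct_translation IS ts tr ->
  forall S, (S = ts \/ S = tr) ->
  forall i : 'I_k,
    (btype_P IS S i -> IS i = true) /\
    (btype_PP IS S i -> first_is_T S i \/ IS i = false).
Proof.
move=> _ _ S _ i; split; first exact: btype_P_full.
move=> bPP; case ISi: (IS i); [left | by right].
exact: btype_PP_first_is_T bPP ISi.
Qed.
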